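(* Let $1\le p,q<\infty$ and $\theta>0$. The vanishing grand amalgam Lebesgue function space $$l^{\overset{\circ}{q}),\theta}(L^p)=\Big\{g\in l^{q),\theta}(L^p):\ \lim_{\varepsilon\to0}\varepsilon^{\theta}\sum_{n\in X}\Big(\int_n^{n+1}|g(x)|^p\,dx\Big)^{\frac{q(1+\varepsilon)}{p}}=0\Big\}$$ is a closed subspace of $l^{q),\theta}(L^p)$.
   Context: Let $X$ be one of $\mathbb N,\mathbb N_0,\mathbb Z$ and $I_k=[k,k+1)$ for $k\in X$. The space $l^{q),\theta}(L^p)$ consists of complex-valued measurable $g$ on $\bigcup_{k\in X}I_k$ with $g\chi_{I_k}\in L^p$ for all $k$ and $$\|g\|_{p,q),\theta}:=\sup_{\varepsilon>0}\Big(\varepsilon^{\theta}\sum_{k\in X}\Big(\int_k^{k+1}|g(x)|^p\,dx\Big)^{\frac{q(1+\varepsilon)}{p}}\Big)^{\frac{1}{q(1+\varepsilon)}}<\infty,$$ with the topology given by this norm. *)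

From HB Require Import structures.
From mathcomp Require Import all_boot all_order all_algebra.
From mathcomp Require Import all_classical all_reals all_analysis.
From mathcomp Require Import complex.
Set Implicit Arguments. Unset Strict Implicit. Unset Printing Implicit Defensive.
Import Order.TTheory GRing.Theory Num.Theory.
Import numFieldNormedType.Exports.
Local Open Scope classical_set_scope.
Local Open Scope ring_scope.

Inductive index_kind := IdxN | IdxN0 | IdxZ.

Definition idx_set (X : index_kind) : set int :=
  match X with
  | IdxN => [set k : int | (1 <= k)%R]
  | IdxN0 => [set k : int | (0 <= k)%R]
  | IdxZ => setT
  end.

Section GrandAmalgam.
Variable R : realType.

Definition I_k (k : int) : set R := `[k%:~R, k%:~R + 1[%classic.

Definition cmeasurable_on (D : set R) (g : R -> R[i]) : Prop :=
  measurable_fun D (fun x => complex.Re (g x)) /\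
  measurable_fun D (fun x => complex.Im (g x)).

Definition loc_int (p : R) (g : R -> R[i]) (k : int) : \bar R :=
  (\int[lebesgue_measure]_(x in I_k k) ((ComplexField.Normc.normc (g x)) `^ p)%:E)%E.

Definition locLp (X : index_kind) (p : R) (g : R -> R[i]) : Prop :=
  forall k, idx_set X k ->
    cmeasurable_on (I_k k) g /\ (loc_int p g k < +oo)%E.

Definition grand_sum (X : index_kind) (p q theta : R) (g : R -> R[i]) (eps : R)
  : \bar R :=
  ((eps `^ theta)%:E *
    \esum_(k in idx_set X) poweR (loc_int p g k) (q * (1 + eps) / p))%E.

Definition grand_norm (X : index_kind) (p q theta : R) (g : R -> R[i]) : \bar R :=
  ereal_sup [set poweR (grand_sum X p q theta g eps) (q * (1 + eps))^-1
            | eps in [set e : R | 0 < e]].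

Definition grand_amalgam (X : index_kind) (p q theta : R) : set (R -> R[i]) :=
  [set g | locLp X p g /\ (grand_norm X p q theta g < +oo)%E].

Definition vanishing_grand_amalgam (X : index_kind) (p q theta : R)
  : set (R -> R[i]) :=
  [set g | grand_amalgam X p q theta g /\
     (grand_sum X p q theta g @ 0^'+ --> 0%E)].

End GrandAmalgam.

(* Everything rests on one domination estimate: if |h| <= M (|f1| + |f2|)
   pointwise, then for every eps > 0 the grand sum of h at eps is at most
   C^(q(1+eps)/p) times the sum of the grand sums of f1 and f2, where C depends
   only on M and p; for eps < 1 this factor is bounded by C^(2q/p). With
   h = f + g and h = c g this makes the vanishing functions a linear subspace.
   For closedness, write g = (g - h) + h with h vanishing and
   ||g - h|| < d <= 1: the grand sum of g - h at eps is at most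
   d^(q(1+eps)) <= d^q, so the grand sum of g is eventually at most
   C^(2q/p) (d^q + o(1)), and d can be taken arbitrarily small. *)

From HB Require Import structures.
From mathcomp Require Import all_boot all_order all_algebra.
From mathcomp Require Import all_classical all_reals all_analysis.
From mathcomp Require Import complex measurable_realfun ring lra.
Import Order.TTheory GRing.Theory Num.Theory.
Import numFieldNormedType.Exports.
Set Implicit Arguments. Unset Strict Implicit. Unset Printing Implicit Defensive.
Local Open Scope classical_set_scope.
Local Open Scope ring_scope.

Local Notation normc := ComplexField.Normc.normc.

Section complex_measurable.
Variables (R : realType) (D : set R).
Implicit Types f g : R -> R[i].

Lemma normcE (z : R[i]) :
  normc z = Num.sqrt (complex.Re z ^+ 2 + complex.Im z ^+ 2).
Proof. by case: z. Qed.

Lemma normc_ge0 (z : R[i]) : 0 <= normc z.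
Proof. by rewrite normcE sqrtr_ge0. Qed.

Lemma cmeasurable_on_normc f :
  cmeasurable_on D f -> measurable_fun D (fun x => normc (f x)).
Proof.
move=> [mRe mIm].
have -> : (fun x => normc (f x)) =
    Num.sqrt \o (fun x => complex.Re (f x) ^+ 2 + complex.Im (f x) ^+ 2).
  by apply/funext => x; rewrite /= normcE.
apply: (measurableT_comp (continuous_measurable_fun (@sqrt_continuous R))).
by apply: measurable_funD; exact: measurable_funX.
Qed.

Lemma cmeasurable_onD f g : cmeasurable_on D f -> cmeasurable_on D g ->
  cmeasurable_on D (fun x => f x + g x).
Proof.
move=> [mRef mImf] [mReg mImg]; split.
- have -> : (fun x => complex.Re (f x + g x)) =
      (fun x => complex.Re (f x) + complex.Re (g x)).
    by apply/funext => x; case: (f x); case: (g x).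
  exact: measurable_funD.
- have -> : (fun x => complex.Im (f x + g x)) =
      (fun x => complex.Im (f x) + complex.Im (g x)).
    by apply/funext => x; case: (f x); case: (g x).
  exact: measurable_funD.
Qed.

Lemma cmeasurable_onMl (c : R[i]) g : cmeasurable_on D g ->
  cmeasurable_on D (fun x => c * g x).
Proof.
move=> [mRe mIm]; have mc (a : R) := @measurable_cst _ _ R R D a.
case: c => a b; split.
- have -> : (fun x => complex.Re ((a +i* b)%C * g x)) =
      (fun x => a * complex.Re (g x) - b * complex.Im (g x)).
    by apply/funext => x; case: (g x).
  by apply: measurable_funB; exact: measurable_funM.
- have -> : (fun x => complex.Im ((a +i* b)%C * g x)) =
      (fun x => a * complex.Im (g x) + b * complex.Re (g x)).
    by apply/funext => x; case: (g x) => u v /=; rewrite addrC.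
  by apply: measurable_funD; exact: measurable_funM.
Qed.

Lemma cmeasurable_onB f g : cmeasurable_on D f -> cmeasurable_on D g ->
  cmeasurable_on D (fun x => f x - g x).
Proof.
move=> mf /(cmeasurable_onMl (-1)) mg.
have -> : (fun x => f x - g x) = (fun x => f x + -1 * g x).
  by apply/funext => x; rewrite mulN1r.
exact: cmeasurable_onD.
Qed.

End complex_measurable.

Section power_inequalities.
Variable R : realType.

Lemma powRD_le (a b t : R) : 0 <= a -> 0 <= b -> 0 <= t ->
  (a + b) `^ t <= 2 `^ t * (a `^ t + b `^ t).
Proof.
move=> a0 b0 t0; set m := Num.max a b.
have m0 : 0 <= m by rewrite le_max a0.
have abm : a + b <= 2 * m.
  by rewrite mulr2n mulrDl mul1r lerD // le_max lexx ?orbT.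
apply: (le_trans (ge0_ler_powR t0 _ _ abm)); rewrite ?nnegrE ?addr_ge0 ?mulr_ge0 //.
rewrite powRM // ler_wpM2l ?powR_ge0 // /m /Num.max.
by case: ltP => _; rewrite ?lerDl ?lerDr powR_ge0.
Qed.

Local Open Scope ereal_scope.

Lemma poweRD_le (x y : \bar R) (t : R) : 0 <= x -> 0 <= y -> (0 <= t)%R ->
  poweR (x + y) t <= (2 `^ t)%:E * (poweR x t + poweR y t).
Proof.
move=> x0 y0 t0; have [->|tN0] := eqVneq t 0%R.
  by rewrite !poweRe0 powRr0 mul1e lee_fin ler_wpDl.
have two_t : (0 < 2 `^ t)%R by rewrite powR_gt0.
case: x y x0 y0 => [x| |] [y| |] // x0 y0.
- by rewrite -EFinD !poweR_EFin -EFinD -EFinM lee_fin powRD_le // -lee_fin.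
- by rewrite addey // poweRyr // addey ?gt0_muley ?lte_fin.
- by rewrite addye // poweRyr // addye ?gt0_muley ?lte_fin.
- by rewrite /= (negbTE tN0) gt0_muley ?lte_fin.
Qed.

Lemma ge0_lee_poweR (x y : \bar R) (t : R) : (0 <= t)%R -> 0 <= x -> x <= y ->
  poweR x t <= poweR y t.
Proof.
move=> t0 x0 xy; apply: gt0_ler_poweR => //.
- by rewrite in_itv /= x0 leey.
- by rewrite in_itv /= (le_trans x0 xy) leey.
Qed.

Lemma esumZl_le (T : choiceType) (S : set T) (k : R) (f : T -> \bar R) :
  (0 <= k)%R -> (forall i, 0 <= f i) ->
  \esum_(i in S) (k%:E * f i) <= k%:E * \esum_(i in S) f i.
Proof.
move=> k0 f0; apply: ge_ereal_sup => _ [A [finA AS]] <-.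
rewrite -ge0_mule_fsumr //; apply: lee_wpmul2l; first by rewrite lee_fin.
by apply: ereal_sup_ubound; exists A.
Qed.

Lemma ge0_integral_powR_dominated d (T : measurableType d)
    (mu : {measure set T -> \bar R}) (D : set T) (a b c : T -> R) (M t : R) :
  measurable D -> (0 <= M)%R -> (0 <= t)%R ->
  measurable_fun D a -> measurable_fun D b -> measurable_fun D c ->
  (forall x, 0 <= a x)%R -> (forall x, 0 <= b x)%R -> (forall x, 0 <= c x)%R ->
  (forall x, D x -> c x <= M * (a x + b x))%R ->
  \int[mu]_(x in D) (c x `^ t)%:E <=
  ((2 * M) `^ t)%:E *
    (\int[mu]_(x in D) (a x `^ t)%:E + \int[mu]_(x in D) (b x `^ t)%:E).
Proof.
move=> mD M0 t0 ma mb mc a0 b0 c0 cab.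
have mpow (f : T -> R) : measurable_fun D f -> measurable_fun D (fun x => f x `^ t)%R.
  exact: (measurableT_comp (measurable_powR t)).
have ab0 x : (0 <= a x `^ t + b x `^ t)%R by rewrite addr_ge0 ?powR_ge0.
rewrite -ge0_integralD //; last 4 first.
- by move=> x _; rewrite lee_fin powR_ge0.
- by apply/measurable_EFinP; exact: mpow.
- by move=> x _; rewrite lee_fin powR_ge0.
- by apply/measurable_EFinP; exact: mpow.
rewrite -ge0_integralZl_EFin //; last 3 first.
- by move=> x _; rewrite lee_fin.
- by apply/measurable_EFinP; apply: measurable_funD; exact: mpow.
- by rewrite powR_ge0.
apply: ge0_le_integral => //.
- by move=> x _; rewrite lee_fin powR_ge0.
- by apply/measurable_EFinP; exact: mpow.
- apply/measurable_EFinP; apply: measurable_funM; first exact: measurable_cst.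
  by apply: measurable_funD; exact: mpow.
move=> x Dx; rewrite lee_fin.
apply: (le_trans (ge0_ler_powR t0 _ _ (cab x Dx))); rewrite ?nnegrE ?mulr_ge0 ?addr_ge0 //.
rewrite !powRM ?mulr_ge0 ?addr_ge0 // (mulrC (2 `^ t)%R) -mulrA ler_wpM2l ?powR_ge0 //.
exact: powRD_le.
Qed.

End power_inequalities.

Lemma ge0_cvge0P (R : realType) (T : Type) (F : set_system T) {FF : Filter F}
    (f : T -> \bar R) :
  (forall x, 0 <= f x)%E ->
  f @ F --> 0%E <-> forall e : R, 0 < e -> \forall x \near F, (f x <= e%:E)%E.
Proof.
move=> f0; have {}f0 : \forall x \near F, (0 <= f x)%E by apply: nearW.
split.
- move/fine_cvgP => [ffin /cvgr0Pnorm_le f_small] e e0.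
  apply: filterS2 ffin (f_small e e0) => x /fineK <- /= fe.
  by rewrite lee_fin (le_trans (ler_norm _) fe).
- move=> f_small; apply/fine_cvgP; split.
  + apply: filterS2 f0 (f_small 1 ltr01) => x x0 x1.
    by rewrite ge0_fin_numE // (le_lt_trans x1) ?ltry.
  + apply/cvgr0Pnorm_le => e e0.
    apply: filterS2 f0 (f_small e e0) => x x0 xe /=.
    have xfin : f x \is a fin_num by rewrite ge0_fin_numE // (le_lt_trans xe) ?ltry.
    by rewrite ger0_norm ?fine_ge0 // -lee_fin fineK.
Qed.

Section grand_amalgam.
Variables (R : realType) (X : index_kind) (p q theta : R).
Hypotheses (p_gt0 : 0 < p) (q_ge1 : 1 <= q).
Let q_gt0 : 0 < q := lt_le_trans ltr01 q_ge1.
Implicit Types (f g h : R -> R[i]) (eps : R).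
Local Notation gsum := (grand_sum X p q theta).
Local Notation gnorm := (grand_norm X p q theta).
Local Notation V := (vanishing_grand_amalgam X p q theta).

Definition locally_cmeasurable g :=
  forall k, idx_set X k -> cmeasurable_on (@I_k R k) g.

Lemma locLp_cmeasurable g : locLp X p g -> locally_cmeasurable g.
Proof. by move=> lg k /lg []. Qed.

Lemma grand_exponent_ge1 eps : 0 <= eps -> 1 <= q * (1 + eps).
Proof. by move=> eps0; rewrite -[1]mulr1 ler_pM //; lra. Qed.

(* (2M)^p bounds the local integrals, the extra 2 comes from raising their
   sum to the power q(1+eps)/p. *)
Definition dom_const (M : R) := 2 * (2 * M) `^ p.

Lemma dom_const_ge1 (M : R) : 1 <= M -> 1 <= dom_const M.
Proof.
move=> M1; have pow_ge1 : (1 <= (2 * M) `^ p)%R.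
  rewrite -[leLHS](powRr0 (2 * M)); apply: ler_powR; [lra | exact: ltW].
rewrite /dom_const; lra.
Qed.

Local Open Scope ereal_scope.

Lemma loc_int_dominated h f1 f2 (M : R) k : (0 <= M)%R ->
  cmeasurable_on (@I_k R k) h -> cmeasurable_on (@I_k R k) f1 ->
  cmeasurable_on (@I_k R k) f2 ->
  (forall x, normc (h x) <= M * (normc (f1 x) + normc (f2 x)))%R ->
  loc_int p h k <= ((2 * M) `^ p)%:E * (loc_int p f1 k + loc_int p f2 k).
Proof.
move=> M0 mh mf1 mf2 hdom.
apply: ge0_integral_powR_dominated => //; rewrite ?ltW //.
- exact: measurable_itv.
- exact: cmeasurable_on_normc.
- exact: cmeasurable_on_normc.
- exact: cmeasurable_on_normc.
all: by move=> x; exact: normc_ge0.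
Qed.

Lemma grand_sum_ge0 g eps : 0 <= gsum g eps.
Proof.
apply: mule_ge0; first by rewrite lee_fin powR_ge0.
by apply: esum_ge0 => *; exact: poweR_ge0.
Qed.

Lemma poweR_grand_sum_le_norm g eps : (0 < eps)%R ->
  poweR (gsum g eps) (q * (1 + eps))^-1 <= gnorm g.
Proof. by move=> eps0; apply: ereal_sup_ubound; exists eps. Qed.

Lemma grand_norm_ge0 g : 0 <= gnorm g.
Proof.
exact: le_trans (poweR_ge0 _ _) (poweR_grand_sum_le_norm g (@ltr01 R)).
Qed.

Lemma grand_sum_le_powR_norm g eps : (0 < eps)%R ->
  gsum g eps <= poweR (gnorm g) (q * (1 + eps)).
Proof.
move=> eps0; set r := (q * (1 + eps))%R.
have r0 : (0 < r)%R := lt_le_trans ltr01 (grand_exponent_ge1 (ltW eps0)).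
have -> : gsum g eps = poweR (poweR (gsum g eps) r^-1) r.
  by rewrite -poweRrM mulVf ?poweRe1 ?grand_sum_ge0 ?lt0r_neq0.
exact: ge0_lee_poweR (ltW r0) (poweR_ge0 _ _) (poweR_grand_sum_le_norm g eps0).
Qed.

Lemma grand_sum_le_small_norm g eps (d : R) : (0 < eps)%R -> (0 < d <= 1)%R ->
  gnorm g <= d%:E -> gsum g eps <= (d `^ q)%:E.
Proof.
move=> eps0 /[dup] d01 /andP[d0 _] gd.
have r1 := grand_exponent_ge1 (ltW eps0).
apply: (le_trans (grand_sum_le_powR_norm g eps0)).
apply: (@le_trans _ _ (poweR d%:E (q * (1 + eps)))).
  by apply: ge0_lee_poweR gd; rewrite ?grand_norm_ge0 ?(le_trans ler01 r1).
rewrite poweR_EFin lee_fin; apply: ger_powR => //.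
by rewrite mulrDr mulr1 lerDl mulr_ge0 ?ltW.
Qed.

Section domination.
Variables (h f1 f2 : R -> R[i]) (M : R).
Hypotheses (M_ge0 : (0 <= M)%R) (mh : locally_cmeasurable h)
  (mf1 : locally_cmeasurable f1) (mf2 : locally_cmeasurable f2)
  (h_dom : forall x, (normc (h x) <= M * (normc (f1 x) + normc (f2 x)))%R).

Lemma grand_sum_dominated eps : (0 < eps)%R ->
  gsum h eps <=
  (dom_const M `^ (q * (1 + eps) / p))%:E * (gsum f1 eps + gsum f2 eps).
Proof.
move=> eps0; set s := (q * (1 + eps) / p)%R.
have s0 : (0 <= s)%R by rewrite divr_ge0 ?mulr_ge0 ?ltW //; lra.
have loc_le k : idx_set X k ->
    poweR (loc_int p h k) s <=
    (dom_const M `^ s)%:E * (poweR (loc_int p f1 k) s + poweR (loc_int p f2 k) s).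
  move=> Xk; have loc_ge0 g : 0 <= loc_int p g k.
    by apply: integral_ge0 => x _; rewrite lee_fin powR_ge0.
  have c0 : (0 <= (2 * M) `^ p)%R by exact: powR_ge0.
  have := loc_int_dominated M_ge0 (mh Xk) (mf1 Xk) (mf2 Xk) h_dom.
  move=> /(ge0_lee_poweR s0 (loc_ge0 h)) /le_trans; apply.
  rewrite poweRM ?lee_fin ?(adde_ge0 (loc_ge0 f1) (loc_ge0 f2)) // poweR_EFin.
  rewrite /dom_const [((2 * _) `^ s)%R]powRM ?powR_ge0 // [(2 `^ s * _)%R]mulrC.
  rewrite EFinM -muleA lee_wpmul2l ?lee_fin ?powR_ge0 //.
  exact: poweRD_le.
have sum_ge0 g : 0 <= \esum_(k in idx_set X) poweR (loc_int p g k) s.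
  by apply: esum_ge0 => k _; exact: poweR_ge0.
rewrite /grand_sum -/s -muleDr ?ge0_adde_def ?inE ?sum_ge0 // muleCA.
rewrite lee_wpmul2l ?lee_fin ?powR_ge0 // -esumD => [|k _|k _]; last 2 first.
- exact: poweR_ge0.
- exact: poweR_ge0.
apply: le_trans (le_esum loc_le) (esumZl_le _ _ _); first exact: powR_ge0.
by move=> k; rewrite adde_ge0 ?poweR_ge0.
Qed.

Lemma grand_sum_dominated_unif eps : (1 <= M)%R -> (0 < eps < 1)%R ->
  gsum h eps <= (dom_const M `^ (2 * q / p))%:E * (gsum f1 eps + gsum f2 eps).
Proof.
move=> M1 /andP[eps0 eps1].
apply: le_trans (grand_sum_dominated eps0) _.
rewrite lee_wpmul2r ?adde_ge0 ?grand_sum_ge0 // lee_fin.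
apply: ler_powR; first exact: dom_const_ge1.
apply: ler_wpM2r; first by rewrite invr_ge0 ltW.
by rewrite [leRHS]mulrC ler_wpM2l ?ltW //; lra.
Qed.

Lemma grand_norm_dominated :
  gnorm h <= (2 * dom_const M `^ p^-1)%:E * (gnorm f1 + gnorm f2).
Proof.
apply: ge_ereal_sup => _ [eps eps0 <-]; set r := (q * (1 + eps))%R.
have r1 : (1 <= r)%R := grand_exponent_ge1 (ltW eps0).
have r0 : (0 < r)%R := lt_le_trans ltr01 r1.
have ri0 : (0 <= r^-1)%R by rewrite invr_ge0 ltW.
have C0 : (0 <= dom_const M)%R by rewrite mulr_ge0 ?powR_ge0.
apply: le_trans (ge0_lee_poweR ri0 (grand_sum_ge0 _ _) (grand_sum_dominated eps0)) _.
rewrite poweRM ?lee_fin ?powR_ge0 ?(adde_ge0 (grand_sum_ge0 _ _) (grand_sum_ge0 _ _)) //.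
rewrite poweR_EFin -powRrM mulrAC mulfV ?lt0r_neq0 // mul1r.
rewrite [(2 * _)%R]mulrC EFinM -muleA lee_wpmul2l ?lee_fin ?powR_ge0 //.
apply: le_trans (poweRD_le (grand_sum_ge0 _ _) (grand_sum_ge0 _ _) ri0) _.
apply: lee_pmul; rewrite ?lee_fin ?powR_ge0 ?adde_ge0 ?poweR_ge0 //.
  by apply: ler1_powR; [lra | rewrite invf_le1].
by apply: leeD; exact: poweR_grand_sum_le_norm.
Qed.

End domination.

Lemma vanishing_dominated h f1 f2 (M : R) : (1 <= M)%R -> V f1 -> V f2 ->
  locally_cmeasurable h ->
  (forall x, normc (h x) <= M * (normc (f1 x) + normc (f2 x)))%R -> V h.
Proof.
move=> M1 [[lf1 nf1] cf1] [[lf2 nf2] cf2] mh h_dom.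
have M0 : (0 <= M)%R := le_trans ler01 M1.
have [mf1 mf2] := (locLp_cmeasurable lf1, locLp_cmeasurable lf2).
split; [split|].
- move=> k Xk; split; first exact: mh.
  apply: le_lt_trans (loc_int_dominated M0 (mh k Xk) (mf1 k Xk) (mf2 k Xk) h_dom) _.
  apply: lte_mul_pinfty.
  + by rewrite lee_fin powR_ge0.
  + by [].
  + exact: lte_add_pinfty (lf1 k Xk).2 (lf2 k Xk).2.
- apply: le_lt_trans (grand_norm_dominated M0 mh mf1 mf2 h_dom) _.
  apply: lte_mul_pinfty.
  + by rewrite lee_fin mulr_ge0 ?powR_ge0.
  + by [].
  + exact: lte_add_pinfty nf1 nf2.
- set K := (dom_const M `^ (2 * q / p))%R.
  apply: (@squeeze_cvge _ _ _ _ (fun=> 0) _ (fun eps => K%:E * (gsum f1 eps + gsum f2 eps))).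
  + near=> eps; rewrite grand_sum_ge0 andTb.
    apply: grand_sum_dominated_unif => //; apply/andP; split.
    * by near: eps; exact: nbhs_right_gt.
    * by near: eps; exact: nbhs_right_lt.
  + exact: cvg_cst.
  + have sum_cvg0 : (fun eps => gsum f1 eps + gsum f2 eps) @ 0^'+ --> 0 + 0.
      by apply: cvgeD; [by [] | exact: cf1 | exact: cf2].
    have Kfin : K%:E \is a fin_num by [].
    by have := cvgeZl Kfin sum_cvg0; rewrite adde0 mule0.
Unshelve. all: by end_near.
Qed.

Lemma vanishing0 : V (fun _ => 0%R).
Proof.
have loc0 k : loc_int p (fun _ => 0%R) k = 0.
  apply: integral0_eq => x _.
  by rewrite ComplexField.Normc.normc0 powR0 ?lt0r_neq0.
have gsum0 eps : (0 < eps)%R -> gsum (fun _ => 0%R) eps = 0.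
  move=> eps0; rewrite /grand_sum esum1 ?mule0 // => k _.
  rewrite loc0 poweR0r // lt0r_neq0 // divr_gt0 //.
  exact: lt_le_trans ltr01 (grand_exponent_ge1 (ltW eps0)).
split; [split|].
- move=> k _; split; first by split; exact: measurable_cst.
  by rewrite loc0 ltry.
- apply: le_lt_trans (ltry 0%R); apply: ge_ereal_sup => _ [eps eps0 <-].
  rewrite gsum0 // poweR0r // invr_neq0 // lt0r_neq0 //.
  exact: lt_le_trans ltr01 (grand_exponent_ge1 (ltW eps0)).
- apply/ge0_cvge0P; first exact: grand_sum_ge0.
  move=> e e0; apply: filterS (nbhs_right_gt 0%R) => eps eps0.
  by rewrite gsum0 // lee_fin ltW.
Qed.

Lemma vanishing_closed g : grand_amalgam X p q theta g ->
  (forall delta : R, (0 < delta)%R ->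
     exists2 h, V h & gnorm (fun x => g x - h x)%R < delta%:E) ->
  V g.
Proof.
move=> Lg approx; split => //; have mg := locLp_cmeasurable Lg.1.
set K := (dom_const 1 `^ (2 * q / p))%R.
have K0 : (0 < K)%R by rewrite powR_gt0 // (lt_le_trans ltr01) ?dom_const_ge1.
apply/ge0_cvge0P; first exact: grand_sum_ge0.
move=> e e0; set a := (e / (2 * K))%R.
have a0 : (0 < a)%R by rewrite divr_gt0 ?mulr_gt0.
set d := (Num.min 1 (a `^ q^-1))%R.
have d0 : (0 < d)%R by rewrite lt_min ltr01 powR_gt0.
have d01 : (0 < d <= 1)%R by rewrite d0 ge_min lexx.
have dq : (d `^ q <= a)%R.
  rewrite -[leRHS](powRr1 (ltW a0)) -(mulVf (lt0r_neq0 q_gt0)) powRrM.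
  apply: (ge0_ler_powR (ltW q_gt0)); first by rewrite nnegrE ltW.
  - by rewrite nnegrE powR_ge0.
  - by rewrite ge_min lexx orbT.
have [h [[lh _] h0] ghd] := approx d d0.
have h_small := (ge0_cvge0P (grand_sum_ge0 h)).1 h0 a a0.
have mh := locLp_cmeasurable lh.
have mgh : locally_cmeasurable (fun x => g x - h x)%R.
  by move=> k Xk; apply: cmeasurable_onB; [exact: mg | exact: mh].
have g_dom x : (normc (g x) <= 1 * (normc (g x - h x) + normc (h x)))%R.
  by rewrite mul1r -{1}(subrK (h x) (g x)) le_normcD.
near=> eps.
have eps01 : (0 < eps < 1)%R.
  by apply/andP; split; near: eps; [exact: nbhs_right_gt | exact: nbhs_right_lt].
apply: le_trans (grand_sum_dominated_unif ler01 mg mgh mh g_dom (lexx 1%R) eps01) _.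
have -> : e%:E = K%:E * (a%:E + a%:E).
  by rewrite -EFinD -EFinM /a; congr EFin; field; rewrite lt0r_neq0.
rewrite lee_wpmul2l ?lee_fin ?(ltW K0) //; apply: leeD.
- apply: le_trans (grand_sum_le_small_norm (andP eps01).1 d01 (ltW ghd)) _.
  by rewrite lee_fin.
- by near: eps; exact: h_small.
Unshelve. all: by end_near.
Qed.

End grand_amalgam.

Theorem theorem2p11 (R : realType) (X : index_kind) (p q theta : R)
  (hp : 1 <= p) (hq : 1 <= q) (htheta : 0 < theta) :
  let L := grand_amalgam X p q theta in
  let V := vanishing_grand_amalgam X p q theta in
  (* V is a subset of L *)
  V `<=` L /\
  (* V is a (complex) linear subspace *)
  V (fun _ => 0) /\
  (forall f g, V f -> V g -> V (fun x => f x + g x)) /\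
  (forall (c : R[i]) g, V g -> V (fun x => c * g x)) /\
  (* V is closed in L for the topology of the norm ||.||_{p,q),theta} *)
  (forall g, L g ->
     (forall delta : R, 0 < delta ->
        exists2 h, V h & (grand_norm X p q theta (fun x => (g x - h x)%R) < delta%:E)%E) ->
     V g).
Proof.
move=> L V; have p_gt0 : 0 < p := lt_le_trans ltr01 hp.
have mV g : V g -> locally_cmeasurable X g.
  by move=> [[lg _] _]; exact: locLp_cmeasurable lg.
split; first by move=> g [].
split; first exact: vanishing0.
split.
  move=> f g Vf Vg; apply: (vanishing_dominated p_gt0 hq (lexx 1) Vf Vg).
    by move=> k Xk; apply: cmeasurable_onD; [exact: mV Vf k Xk | exact: mV Vg k Xk].
  by move=> x; rewrite mul1r le_normcD.
split.
  move=> c g Vg; have c1 : 1 <= normc c + 1 by rewrite lerDr normc_ge0.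
  apply: (vanishing_dominated p_gt0 hq c1 Vg Vg).
    by move=> k Xk; apply: cmeasurable_onMl; exact: mV Vg k Xk.
  move=> x; rewrite ComplexField.Normc.normcM.
  have := normc_ge0 c; have := normc_ge0 (g x); nra.
exact: vanishing_closed.
Qed.
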